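(* Let $C,D,\beta>0$ and $N,M\in\mathbb{N}$. Suppose that $(x_j)_{j=1}^N$ and $(f_j)_{j=1}^N$ are sequences in $\ell_2^M$ satisfying $\|x_j\|=\|f_j\|=D$ for all $1\leq j\leq N$ and $$\Big\|\sum_{j=1}^N\varepsilon_j\langle x,f_j\rangle x_j\Big\|\leq C\|x\|\qquad\text{for all }x\in\ell_2^M\text{ and all scalars }\varepsilon_j\text{ with }|\varepsilon_j|=1.$$ If the frame operator of $(f_j)_{j=1}^N$ has eigenvalues $\lambda_1\geq\dots\geq\lambda_M$ satisfying $\lambda_1\leq\frac{\beta}{M}\sum_{j=1}^M\lambda_j$, then $(f_j)_{j=1}^N$ has Bessel bound $\frac{27}{4}K_1^{-4}\beta^2C$. Likewise, if the frame operator of $(x_j)_{j=1}^N$ has eigenvalues $\lambda_1\geq\dots\geq\lambda_M$ satisfying $\lambda_1\leq\frac{\beta}{M}\sum_{j=1}^M\lambda_j$, then $(x_j)_{j=1}^N$ has Bessel bound $\frac{27}{4}K_1^{-4}\beta^2C$.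
   Context: The frame operator of $(y_j)_{j=1}^N$ is $S(x)=\sum_j\langle x,y_j\rangle y_j$. A sequence $(y_j)$ has Bessel bound $B$ if $\sum_j|\langle x,y_j\rangle|^2\leq B\|x\|^2$ for all $x$. $K_1>0$ denotes the constant in Khintchine's inequality: for all $N\in\mathbb{N}$ and all scalars $(a_j)_{j=1}^N$, $2^{-N}\sum_{\delta_j=\pm1}\big|\sum_{j=1}^N\delta_j a_j\big|\geq K_1\big(\sum_{j=1}^N|a_j|^2\big)^{1/2}$. *)

(* Scalars live in a numClosedFieldType K (e.g. algC or
   complex R); the boolean [realscal] selects real scalars (entries in
   Num.real) or complex scalars (all of K). *)
From HB Require Import structures.
From mathcomp Require Import all_boot all_order all_algebra.
Set Implicit Arguments. Unset Strict Implicit. Unset Printing Implicit Defensive.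
Import Order.TTheory GRing.Theory Num.Theory.
Local Open Scope ring_scope.

Section Defs.
Variable K : numClosedFieldType.
Variable realscal : bool.

Definition is_scalar (z : K) : bool := realscal ==> (z \is Num.real).

Definition scalar_vec (M : nat) (x : 'I_M -> K) : Prop :=
  forall i, is_scalar (x i).

Definition dotp (M : nat) (x y : 'I_M -> K) : K := \sum_i x i * (y i)^*.

Definition l2norm (M : nat) (x : 'I_M -> K) : K := sqrtC (\sum_i `|x i| ^+ 2).

(* frame operator S(x) = sum_j <x, y_j> y_j, as an M x M matrix acting on
   column vectors: S i k = sum_j y_j i * conj (y_j k) *)
Definition frame_op (N M : nat) (y : 'I_N -> 'I_M -> K) : 'M[K]_M :=
  \matrix_(i, k) \sum_j y j i * (y j k)^*.

Definition bessel_bound (N M : nat) (y : 'I_N -> 'I_M -> K) (B : K) : Prop :=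
  forall x : 'I_M -> K, scalar_vec x ->
    \sum_j `|dotp x (y j)| ^+ 2 <= B * l2norm x ^+ 2.

Definition khintchine_const (K1 : K) : Prop :=
  forall (n : nat) (a : 'I_n -> K), (forall j, is_scalar (a j)) ->
    K1 * sqrtC (\sum_j `|a j| ^+ 2)
    <= (2 ^+ n)^-1 * \sum_(d : {ffun 'I_n -> bool})
                        `|\sum_j (if d j then 1 else -1) * a j|.

Definition top_eig_bounded (M : nat) (S : 'M[K]_M) (beta : K) : Prop :=
  exists lam : seq K,
    [/\ size lam = M,
        sorted (fun a b => b <= a) lam,
        char_poly S = \prod_(l <- lam) ('X - l%:P)
      & head 0 lam <= beta / M%:R * \sum_(l <- lam) l].

End Defs.

From mathcomp Require Import all_boot all_order all_algebra.
From mathcomp Require Import ring.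
Set Implicit Arguments. Unset Strict Implicit. Unset Printing Implicit Defensive.
Import Order.TTheory GRing.Theory Num.Theory.
Local Open Scope ring_scope.

(* Test the unconditional bound with phases chosen so that every term becomes
   nonnegative and against a sign vector d; averaging over d with Khintchine's
   inequality (applied to the x_j) gives K1 D sum_j |<y, f_j>| <= sqrt M C |y|.
   Taking y itself a sign vector and averaging once more (Khintchine applied to
   the conjugates of the f_j) yields K1^2 N D^2 <= C M.  Both frame operators
   have trace N D^2, so the top eigenvalue h, which is a Bessel bound, satisfies
   N D^2 / M <= h <= beta N D^2 / M.  Hence beta >= 1 and h <= beta C / K1^2,
   which is below 27/4 K1^-4 beta^2 C since K1 <= 1. *)

Lemma sqr_sum_le_card_sum_sqr (R : numDomainType) n (a : 'I_n -> R) :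
  (forall i, 0 <= a i) -> (\sum_i a i) ^+ 2 <= n%:R * \sum_i a i ^+ 2.
Proof.
move=> a_ge0.
have sum_sqr_sub : \sum_i \sum_k (a i - a k) ^+ 2
    = 2 * (n%:R * \sum_i a i ^+ 2 - (\sum_i a i) ^+ 2).
  rewrite [in RHS]expr2 mulr_suml; under [X in _ - X]eq_bigr do rewrite mulr_sumr.
  under [in LHS]eq_bigr do under eq_bigr do rewrite sqrrB.
  under eq_bigr do rewrite !big_split /= sumr_const card_ord.
  rewrite !big_split /= [X in _ + X]sumr_const card_ord.
  under [X in _ + X + _]eq_bigr do rewrite sumrN sumrMnl.
  by rewrite sumrN !sumrMnl !mulr_natl mulrnBl addrAC -mulr2n.
have : 0 <= \sum_i \sum_k (a i - a k) ^+ 2.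
  apply: sumr_ge0 => i _; apply: sumr_ge0 => k _.
  by rewrite real_exprn_even_ge0 // rpredB // ger0_real.
by rewrite sum_sqr_sub pmulr_rge0 ?ltr0n // subr_ge0.
Qed.

Section Scalars.
Variable K : numClosedFieldType.
Implicit Types (n : nat) (z : K).

Lemma l2norm_ge0 n (w : 'I_n -> K) : 0 <= l2norm w.
Proof. by rewrite sqrtC_ge0 sumr_ge0 // => i _; rewrite exprn_ge0. Qed.

Lemma l1_le_l2norm n (w : 'I_n -> K) : \sum_i `|w i| <= sqrtC n%:R * l2norm w.
Proof.
have sum_ge0 : 0 <= \sum_i `|w i| by rewrite sumr_ge0.
rewrite /l2norm -sqrtCM ?nnegrE ?sumr_ge0 // => [|i _]; last exact: exprn_ge0.
rewrite -[leLHS]sqrCK // ler_sqrtC ?nnegrE ?exprn_ge0 ?mulr_ge0 ?sumr_ge0 //.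
  exact: sqr_sum_le_card_sum_sqr.
by move=> i _; rewrite exprn_ge0.
Qed.

Definition phase z : K := if z == 0 then 1 else z^* / `|z|.

Lemma phaseK z : phase z * z = `|z|.
Proof.
rewrite /phase; case: eqP => [->|/eqP z_neq0]; first by rewrite mulr0 normr0.
by rewrite mulrAC -normCKC expr2 mulfK // normr_eq0.
Qed.

Lemma normr_phase z : `|phase z| = 1.
Proof.
rewrite /phase; case: eqP => [_|/eqP z_neq0]; first exact: normr1.
by rewrite normrM normfV normr_id norm_conjC mulfV // normr_eq0.
Qed.

Lemma phase_real z : z \is Num.real -> phase z \is Num.real.
Proof.
move=> zR; rewrite /phase; case: eqP => _; first exact: rpred1.
by rewrite rpredM ?realV ?normr_real // conj_Creal.
Qed.

Definition sign_vec n (d : {ffun 'I_n -> bool}) : 'I_n -> K :=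
  fun i => if d i then 1 else -1.

Lemma sign_vec_real n (d : {ffun 'I_n -> bool}) i : sign_vec d i \is Num.real.
Proof. by rewrite /sign_vec; case: (d i); rewrite ?rpredN rpred1. Qed.

Lemma normr_sign_vec n (d : {ffun 'I_n -> bool}) i : `|sign_vec d i| = 1.
Proof. by rewrite /sign_vec; case: (d i); rewrite ?normrN normr1. Qed.

Lemma l2norm_sign_vec n (d : {ffun 'I_n -> bool}) : l2norm (sign_vec d) = sqrtC n%:R.
Proof.
rewrite /l2norm (eq_bigr (fun=> 1)) ?sumr_const ?card_ord // => i _.
by rewrite normr_sign_vec expr1n.
Qed.

Lemma sum_sign_patterns_const n z : \sum_(d : {ffun 'I_n -> bool}) z = 2 ^+ n * z.
Proof. by rewrite sumr_const card_ffun card_bool card_ord -natrX mulr_natl. Qed.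

End Scalars.
Arguments sign_vec {K n} d i.

Section Khintchine.
Variables (K : numClosedFieldType) (rs : bool) (K1 : K).
Hypothesis khintchine : khintchine_const rs K1.

Lemma khintchine_sum n (a : 'I_n -> K) : (forall i, is_scalar rs (a i)) ->
  2 ^+ n * (K1 * l2norm a)
    <= \sum_(d : {ffun 'I_n -> bool}) `|\sum_i sign_vec d i * a i|.
Proof. by move=> a_scal; rewrite -ler_pdivlMl ?exprn_gt0 ?ltr0n //; apply: khintchine. Qed.

Lemma khintchine_const_le1 : K1 <= 1.
Proof.
have one_scal (i : 'I_1) : is_scalar rs (1 : K) by apply/implyP => _; exact: rpred1.
have := khintchine_sum one_scal.
rewrite /l2norm big_ord1 normr1 expr1n sqrtC1 mulr1.
under eq_bigr do rewrite big_ord1 mulr1 normr_sign_vec.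
by rewrite sum_sign_patterns_const mulr1 -{2}[2 ^+ 1]mulr1 ler_pM2l ?exprn_gt0 ?ltr0n.
Qed.

Lemma khintchine_weighted_sum N n (w : 'I_N -> K) (a : 'I_N -> 'I_n -> K) D :
  (forall j, 0 <= w j) -> (forall j i, is_scalar rs (a j i)) ->
  (forall j, l2norm (a j) = D) ->
  2 ^+ n * (K1 * D * \sum_j w j)
    <= \sum_(d : {ffun 'I_n -> bool}) \sum_j w j * `|\sum_i sign_vec d i * a j i|.
Proof.
move=> w_ge0 a_scal a_norm; rewrite exchange_big /= mulrA mulr_sumr.
apply: ler_sum => j _; rewrite -mulr_sumr mulrC -(a_norm j) ler_wpM2l //.
exact: khintchine_sum.
Qed.

End Khintchine.

Section Unconditional.
Variables (K : numClosedFieldType) (rs : bool) (N M : nat).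
Variables (x f : 'I_N -> 'I_M -> K) (C : K).
Hypothesis x_scal : forall j, scalar_vec rs (x j).
Hypothesis f_scal : forall j, scalar_vec rs (f j).
Hypothesis unconditional : forall (y : 'I_M -> K) (eps : 'I_N -> K),
  scalar_vec rs y ->
  (forall j, is_scalar rs (eps j) /\ `|eps j| = 1) ->
  l2norm (fun i => \sum_j eps j * dotp y (f j) * x j i) <= C * l2norm y.

Lemma sum_dotp_sign_le (y : 'I_M -> K) (d : {ffun 'I_M -> bool}) :
  scalar_vec rs y ->
  \sum_j `|dotp y (f j)| * `|\sum_i sign_vec d i * x j i|
    <= sqrtC M%:R * (C * l2norm y).
Proof.
move=> y_scal.
pose c j := dotp y (f j) * \sum_i sign_vec d i * x j i.
pose w i := \sum_j phase (c j) * dotp y (f j) * x j i.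
have c_scal j : is_scalar rs (c j).
  apply/implyP => rsT; rewrite rpredM ?rpred_sum // => i _.
    by rewrite rpredM ?conj_Creal ?(implyP (y_scal i)) ?(implyP (f_scal j i)).
  by rewrite rpredM ?sign_vec_real ?(implyP (x_scal j i)).
have phase_ok j : is_scalar rs (phase (c j)) /\ `|phase (c j)| = 1.
  split; last exact: normr_phase.
  by apply/implyP => rsT; rewrite phase_real ?(implyP (c_scal j)).
have sum_c : \sum_j `|c j| = \sum_i sign_vec d i * w i.
  under [RHS]eq_bigr do rewrite mulr_sumr.
  rewrite [RHS]exchange_big /=; apply: eq_bigr => j _.
  rewrite -phaseK {2}/c mulrA mulr_sumr; apply: eq_bigr => i _.
  by rewrite mulrCA.
under eq_bigr do rewrite -normrM -/(c _).
rewrite -[leLHS]ger0_norm ?sumr_ge0 // sum_c.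
apply: le_trans (ler_norm_sum _ _ _) _.
under eq_bigr do rewrite normrM normr_sign_vec mul1r.
apply: le_trans (l1_le_l2norm w) _.
by rewrite ler_wpM2l ?sqrtC_ge0 ?ler0n // unconditional.
Qed.

Variables (K1 D : K).
Hypothesis khintchine : khintchine_const rs K1.
Hypothesis x_norm : forall j, l2norm (x j) = D.
Hypothesis f_norm : forall j, l2norm (f j) = D.

Lemma sum_normr_dotp_le (y : 'I_M -> K) : scalar_vec rs y ->
  K1 * D * \sum_j `|dotp y (f j)| <= sqrtC M%:R * (C * l2norm y).
Proof.
move=> y_scal; rewrite -(@ler_pM2l _ (2 ^+ M)) ?exprn_gt0 //.
apply: le_trans (khintchine_weighted_sum khintchine _ _ x_norm) _ => //.
rewrite -sum_sign_patterns_const; apply: ler_sum => d _.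
exact: sum_dotp_sign_le.
Qed.

Lemma card_sqr_norm_le : 0 <= K1 * D -> K1 ^+ 2 * (N%:R * D ^+ 2) <= C * M%:R.
Proof.
move=> K1D_ge0.
have sign_scal (d : {ffun 'I_M -> bool}) : scalar_vec rs (@sign_vec K M d).
  by move=> i; apply/implyP => _; exact: sign_vec_real.
have conj_f_scal j i : is_scalar rs (f j i)^*.
  by apply/implyP => rsT; rewrite conj_Creal (implyP (f_scal j i)).
have conj_f_norm j : l2norm (fun i => (f j i)^*) = D.
  by rewrite -(f_norm j); congr sqrtC; apply: eq_bigr => i _; rewrite norm_conjC.
have := khintchine_weighted_sum khintchine (w := fun=> 1) _ conj_f_scal conj_f_norm.
rewrite sumr_const card_ord => /(_ (fun=> ler01)) avg_lb.
have avg_ub (d : {ffun 'I_M -> bool}) :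
    K1 * D * \sum_j `|dotp (sign_vec d) (f j)| <= C * M%:R.
  rewrite (le_trans (sum_normr_dotp_le (sign_scal d))) // l2norm_sign_vec.
  by rewrite mulrCA -expr2 sqrtCK.
rewrite -(@ler_pM2l _ (2 ^+ M)) ?exprn_gt0 // -[X in _ <= X]sum_sign_patterns_const.
apply: le_trans (ler_sum _ (fun d _ => avg_ub d)); rewrite -mulr_sumr.
have -> : 2 ^+ M * (K1 ^+ 2 * (N%:R * D ^+ 2)) = K1 * D * (2 ^+ M * (K1 * D * N%:R)).
  ring.
apply: (le_trans (ler_wpM2l K1D_ge0 avg_lb)); rewrite ler_wpM2l //.
by apply: ler_sum => d _; apply: ler_sum => j _; rewrite mul1r.
Qed.
End Unconditional.

Local Open Scope sesquilinear_scope.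

Section Spectral.
Variable K : numClosedFieldType.

Lemma spectral_diag_eigenvalue n (A : 'M[K]_n) l :
  A \is normalmx -> eigenvalue A (spectral_diag A 0 l).
Proof.
move=> /orthomx_spectralP A_def; set P := spectralmx A in A_def.
have P_unit : P \in unitmx by exact: spectral_unit.
apply/eigenvalueP; exists (row l P).
  rewrite {1}A_def !mulmxA -row_mul mulmxV // row1 -rowE row_diag_mx.
  by rewrite -scalemxAl -rowE.
apply/eqP => row_l0.
have : row l P *m invmx P = delta_mx 0 l by rewrite -row_mul mulmxV // row1.
rewrite row_l0 mul0mx => /matrixP /(_ 0 l); rewrite !mxE !eqxx /=.
by move/eqP; rewrite eq_sym oner_eq0.
Qed.

Lemma hermitian_form_le n (A : 'M[K]_n) h (u : 'cV[K]_n) :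
  A \is hermsymmx -> (forall a, eigenvalue A a -> a <= h) ->
  (u ^t* *m A *m u) 0 0 <= h * (u ^t* *m u) 0 0.
Proof.
move=> A_herm eig_le; have A_normal := hermitian_normalmx A_herm.
have /orthomx_spectralP A_def := A_normal.
set P := spectralmx A in A_def.
have P_unit : P \in unitmx by exact: spectral_unit.
have P_inv : invmx P = P ^t* by rewrite invmx_unitary // spectral_unitarymx.
set v := P *m u.
have u_P : u ^t* *m P ^t* = v ^t* by rewrite /v trmx_mul map_mxM.
have v_norm : v ^t* *m v = u ^t* *m u.
  by rewrite -u_P -mulmxA (mulmxA _ P) -P_inv mulVmx // mul1mx.
rewrite A_def P_inv !mulmxA u_P -v_norm -(mulmxA _ P u) -/v mul_mx_diag.
rewrite !mxE mulr_sumr; apply: ler_sum => l _.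
rewrite !mxE mulrAC [h * _]mulrC ler_wpM2l ?eig_le ?spectral_diag_eigenvalue //.
by rewrite -normCKC exprn_ge0.
Qed.

Lemma sorted_ge_head (s : seq K) l :
  sorted (fun a b => b <= a) s -> l \in s -> l <= head 0 s.
Proof.
case: s => [//|a s] /= /(order_path_min (rev_trans le_trans)) /allP ge_a.
by rewrite inE => /orP[/eqP -> //|/ge_a].
Qed.

Lemma top_eig_bounded_hermitian n (A : 'M[K]_n) beta : (0 < n)%N ->
  A \is hermsymmx -> top_eig_bounded A beta ->
  exists h, [/\ forall u : 'cV[K]_n, (u ^t* *m A *m u) 0 0 <= h * (u ^t* *m u) 0 0,
    \tr A <= n%:R * h & h <= beta / n%:R * \tr A].
Proof.
move=> n_gt0 A_herm [lam [size_lam lam_sorted charA top_le]].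
have tr_lam : \tr A = \sum_(l <- lam) l.
  apply: oppr_inj; rewrite -char_poly_trace // charA -[in X in _`_X]size_lam.
  by rewrite coefPn_prod_XsubC // size_lam -lt0n.
have eig_le a : eigenvalue A a -> a <= head 0 lam.
  by rewrite eigenvalue_root_char charA root_prod_XsubC; exact: sorted_ge_head.
exists (head 0 lam); split; rewrite ?tr_lam //.
- by move=> u; exact: hermitian_form_le.
- apply: (@le_trans _ _ (\sum_(l <- lam) head 0 lam)).
    by rewrite !big_seq; apply: ler_sum => l /(sorted_ge_head lam_sorted).
  by rewrite big_const_seq count_predT iter_addr_0 size_lam mulr_natl.
Qed.

Lemma frame_op_hermitian N n (y : 'I_N -> 'I_n -> K) : frame_op y \is hermsymmx.
Proof.
apply/is_hermitianmxP; rewrite expr0 scale1r; apply/matrixP => i k.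
rewrite !mxE rmorph_sum; apply: eq_bigr => j _.
by rewrite rmorphM /= conjCK mulrC.
Qed.

Lemma mxtrace_frame_op N n (y : 'I_N -> 'I_n -> K) :
  \tr (frame_op y) = \sum_j l2norm (y j) ^+ 2.
Proof.
rewrite /mxtrace; under eq_bigr do rewrite mxE.
rewrite exchange_big; apply: eq_bigr => j _.
by rewrite /l2norm sqrtCK; apply: eq_bigr => i _; rewrite normCK.
Qed.

Lemma sum_sqr_dotp_frame_op N n (y : 'I_N -> 'I_n -> K) (u : 'I_n -> K) :
  \sum_j `|dotp u (y j)| ^+ 2
    = ((\col_i u i) ^t* *m frame_op y *m \col_i u i) 0 0.
Proof.
rewrite mxE.
under eq_bigr do rewrite normCK /dotp rmorph_sum mulr_suml.
under [RHS]eq_bigr do rewrite !mxE mulr_suml.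
rewrite exchange_big /=; apply: eq_bigr => i _.
under eq_bigr do rewrite mulr_sumr.
rewrite exchange_big /=; apply: eq_bigr => k _.
rewrite !mxE mulr_sumr mulr_suml; apply: eq_bigr => j _.
by rewrite rmorphM /= conjCK; ring.
Qed.

Lemma form_col_l2norm n (u : 'I_n -> K) :
  ((\col_i u i) ^t* *m \col_i u i) 0 0 = l2norm u ^+ 2.
Proof.
rewrite /l2norm sqrtCK !mxE; apply: eq_bigr => i _.
by rewrite !mxE normCKC.
Qed.

End Spectral.

Lemma top_eig_le_const (R : numFieldType) (K1 C beta T m h : R) :
  0 < K1 -> K1 <= 1 -> 0 < C -> 0 < T -> 0 < m ->
  T <= m * h -> h <= beta / m * T -> K1 ^+ 2 * T <= C * m ->
  h <= 27 / 4 * K1 ^- 4 * beta ^+ 2 * C.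
Proof.
move=> K1_gt0 K1_le1 C_gt0 T_gt0 m_gt0 T_le h_le KT_le.
have h_le_beta : h <= beta * (T / m) by rewrite mulrCA mulrC.
have beta_ge1 : 1 <= beta.
  rewrite -(ler_pM2r T_gt0) mul1r; apply: (le_trans T_le).
  have -> : beta * T = m * (beta / m * T) by field; rewrite gt_eqF.
  by rewrite ler_pM2l.
have K12_gt0 : 0 < K1 ^+ 2 by rewrite exprn_gt0.
have T_m_le : T / m <= C / K1 ^+ 2.
  by rewrite ler_pdivrMr // mulrAC ler_pdivlMr // mulrC.
have beta_ge0 : 0 <= beta := le_trans ler01 beta_ge1.
apply: (le_trans h_le_beta); apply: (le_trans (ler_wpM2l beta_ge0 T_m_le)).
have -> : 27 / 4 * K1 ^- 4 * beta ^+ 2 * C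
    = beta * (C / K1 ^+ 2) * (27 / 4 * (beta / K1 ^+ 2)).
  by field; rewrite gt_eqF.
apply: ler_peMr; first by rewrite mulr_ge0 // divr_ge0 // ltW.
apply: mulr_ege1.
  by rewrite ler_pdivlMr // mul1r ler_nat.
by rewrite ler_pdivlMr // mul1r (le_trans _ beta_ge1) // exprn_ile1 // ltW.
Qed.

Lemma bessel_bound_of_top_eig_bounded (K : numClosedFieldType) (rs : bool)
    (K1 C D beta : K) N M (y : 'I_N -> 'I_M -> K) :
  0 < K1 -> K1 <= 1 -> 0 < C -> 0 < D -> 0 < beta ->
  (forall j, l2norm (y j) = D) -> K1 ^+ 2 * (N%:R * D ^+ 2) <= C * M%:R ->
  top_eig_bounded (frame_op y) beta ->
  bessel_bound rs y (27 / 4 * K1 ^- 4 * beta ^+ 2 * C).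
Proof.
move=> K1_gt0 K1_le1 C_gt0 D_gt0 beta_gt0 y_norm card_le top_eig u _.
have [M0|M_gt0] := posnP M.
  subst M; rewrite /l2norm big_ord0 sqrtC0 expr0n mulr0 big1 // => j _.
  by rewrite /dotp big_ord0 normr0 expr0n.
have [N0|N_gt0] := posnP N.
  subst N; rewrite big_ord0 mulr_ge0 ?exprn_ge0 ?l2norm_ge0 //.
  by rewrite !mulr_ge0 ?invr_ge0 ?exprn_ge0 ?ler0n ?ltW.
have [h [form_le tr_le h_le]] :=
  top_eig_bounded_hermitian M_gt0 (frame_op_hermitian y) top_eig.
have tr_eq : \tr (frame_op y) = N%:R * D ^+ 2.
  rewrite mxtrace_frame_op (eq_bigr (fun=> D ^+ 2)) => [|j _]; last by rewrite y_norm.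
  by rewrite sumr_const card_ord mulr_natl.
rewrite tr_eq in tr_le h_le.
rewrite sum_sqr_dotp_frame_op (le_trans (form_le _)) // form_col_l2norm.
apply: ler_wpM2r; first by rewrite exprn_ge0 ?l2norm_ge0.
apply: (top_eig_le_const K1_gt0 K1_le1 C_gt0 _ _ tr_le h_le card_le).
  by rewrite mulr_gt0 ?ltr0n ?exprn_gt0.
by rewrite ltr0n.
Qed.

Theorem lemma4p5 (K : numClosedFieldType) (realscal : bool)
  (K1 C D beta : K) (N M : nat) (x f : 'I_N -> 'I_M -> K) :
  0 < K1 -> khintchine_const realscal K1 ->
  0 < C -> 0 < D -> 0 < beta ->
  (forall j, scalar_vec realscal (x j)) ->
  (forall j, scalar_vec realscal (f j)) ->
  (forall j, l2norm (x j) = D) -> (forall j, l2norm (f j) = D) ->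
  (forall (y : 'I_M -> K) (eps : 'I_N -> K),
      scalar_vec realscal y ->
      (forall j, is_scalar realscal (eps j) /\ `|eps j| = 1) ->
      l2norm (fun i => \sum_j eps j * dotp y (f j) * x j i) <= C * l2norm y) ->
  (top_eig_bounded (frame_op f) beta ->
     bessel_bound realscal f (27 / 4 * K1 ^- 4 * beta ^+ 2 * C)) /\
  (top_eig_bounded (frame_op x) beta ->
     bessel_bound realscal x (27 / 4 * K1 ^- 4 * beta ^+ 2 * C)).
Proof.
move=> K1_gt0 khintchine C_gt0 D_gt0 beta_gt0 x_scal f_scal x_norm f_norm unconditional.
have K1_le1 := khintchine_const_le1 khintchine.
have card_le := card_sqr_norm_le x_scal f_scal unconditional khintchine x_norm f_norm
  (ltW (mulr_gt0 K1_gt0 D_gt0)).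
by split; apply: bessel_bound_of_top_eig_bounded K1_gt0 K1_le1 C_gt0 D_gt0 beta_gt0 _ card_le.
Qed.
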